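(* Let $n\ge 3$ be an odd integer and $(\mathcal{C},\Sigma)$ an $n$-angulated category. For objects $A,B$ of $\mathcal{C}$ the following are equivalent: (1) $[A]=[B]$ in $K_0(\mathcal{C})$; (2) there exist objects $C_1,\dots,C_n$ and two $n$-angles $A\oplus C_1\xrightarrow{\alpha_1}C_2\xrightarrow{\alpha_2}\cdots\xrightarrow{\alpha_{n-1}}C_n\xrightarrow{\alpha_n}\Sigma A\oplus\Sigma C_1$ and $B\oplus C_1\xrightarrow{\beta_1}C_2\xrightarrow{\beta_2}\cdots\xrightarrow{\beta_{n-1}}C_n\xrightarrow{\beta_n}\Sigma B\oplus\Sigma C_1$ in $\mathcal{C}$.
   Context: All categories are small. Fix an integer $n\ge 3$. Let $\mathcal{C}$ be an additive category with an automorphism $\Sigma$. An $n$-$\Sigma$-sequence in $\mathcal{C}$ is a diagram $A_1\xrightarrow{\alpha_1}A_2\xrightarrow{\alpha_2}\cdots\xrightarrow{\alpha_{n-1}}A_n\xrightarrow{\alpha_n}\Sigma A_1$. Its left rotation is $A_2\xrightarrow{\alpha_2}\cdots\xrightarrow{\alpha_n}\Sigma A_1\xrightarrow{(-1)^n\Sigma\alpha_1}\Sigma A_2$. A morphism from $(A_\bullet,\alpha)$ to $(B_\bullet,\beta)$ is a tuple $(\varphi_1,\dots,\varphi_n)$, $\varphi_i:A_i\to B_i$, with $\beta_i\varphi_i=\varphi_{i+1}\alpha_i$ for $1\le i\le n-1$ and $\beta_n\varphi_n=(\Sigma\varphi_1)\alpha_n$; it is an isomorphism if all $\varphi_i$ are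 isomorphisms. Direct sums of sequences are taken termwise. $(\mathcal{C},\Sigma)$ is $n$-angulated if it is equipped with a collection $\mathscr N$ of $n$-$\Sigma$-sequences, called $n$-angles, such that: (N1)(a) $\mathscr N$ is closed under direct sums, direct summands and isomorphisms of $n$-$\Sigma$-sequences; (b) for every object $A$, the trivial sequence $A\xrightarrow{1}A\to0\to\cdots\to0\to\Sigma A$ is in $\mathscr N$; (c) every morphism $A_1\to A_2$ is the first morphism of some $n$-angle; (N2) an $n$-$\Sigma$-sequence is in $\mathscr N$ iff its left rotation is; (N3) given $n$-angles $(A_\bullet,\alpha),(B_\bullet,\beta)$ and $\varphi_1:A_1\to B_1$, $\varphi_2:A_2\to B_2$ with $\beta_1\varphi_1=\varphi_2\alpha_1$, there exist $\varphi_3,\dots,\varphi_n$ making $(\varphi_1,\dots,\varphi_n)$ a morphism; (N4) in (N3) the $\varphi_i$ can be chosen so that the mapping cone $A_2\oplus B_1\to A_3\oplus B_2\to\cdots\to\Sigma A_1\oplus B_n\to\Sigma A_2\oplus\Sigma B_1$, with maps $\left[\begin{smallmatrix}-\alpha_{i+1}&0\\ \varphi_{i+1}&\beta_i\end{smallmatrix}\right]$ ($1\le i\le n-1$) and last map $\left[\begin{smallmatrix}-\Sigma\alpha_1&0\\ \Sigma\varphi_1&\beta_n\end{smallmatrix}\right]$, is an $n$-angle. Grothendieck group: let $F(\mathcal{C})$ be the free abelian group on the isomorphism classes $\langle A\rangle$ of objects of $\mathcal{C}$. For an $n$-angle $A_\bullet$ put $\chi(A_\bullet)=\sum_{i=1}^n(-1)^{i+1}\langle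 A_i\rangle$. Let $R(\mathcal{C})$ be the subgroup generated by all $\chi(A_\bullet)$ ($A_\bullet$ an $n$-angle), together with $\langle 0\rangle$ when $n$ is even. Then $K_0(\mathcal{C})=F(\mathcal{C})/R(\mathcal{C})$, and $[A]$ denotes the class of $\langle A\rangle$. *)

From HB Require Import structures.
From mathcomp Require Import all_boot all_order all_algebra.
From Stdlib Require Import ClassicalEpsilon.
Set Implicit Arguments. Unset Strict Implicit. Unset Printing Implicit Defensive.
Import GRing.Theory.
Local Open Scope ring_scope.

Record Cat := {
  Obj : Type;
  Hom : Obj -> Obj -> zmodType;
  comp : forall A B C : Obj, Hom B C -> Hom A B -> Hom A C;
  idm : forall A : Obj, Hom A A;
  zob : Obj;
  dsum : Obj -> Obj -> Obj;
  inj1 : forall A B, Hom A (dsum A B);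
  inj2 : forall A B, Hom B (dsum A B);
  prj1 : forall A B, Hom (dsum A B) A;
  prj2 : forall A B, Hom (dsum A B) B }.

Arguments comp {c A B C}.
Arguments idm {c}.
Arguments zob {c}.
Arguments dsum {c}.
Arguments inj1 {c A B}.
Arguments inj2 {c A B}.
Arguments prj1 {c A B}.
Arguments prj2 {c A B}.

Definition additive (C : Cat) : Prop :=
  (forall (A B X D : Obj C) (f : Hom X D) (g : Hom B X) (h : Hom A B),
      comp f (comp g h) = comp (comp f g) h) /\
  (forall (A B : Obj C) (f : Hom A B), comp (idm B) f = f /\ comp f (idm A) = f) /\
  (forall (A B X : Obj C) (f : Hom B X) (g h : Hom A B),
      comp f (g + h) = comp f g + comp f h) /\
  (forall (A B X : Obj C) (f g : Hom B X) (h : Hom A B),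
      comp (f + g) h = comp f h + comp g h) /\
  (forall (A : Obj C) (f : Hom zob A), f = 0) /\
  (forall (A : Obj C) (f : Hom A zob), f = 0) /\
  (forall A B : Obj C,
      comp (@prj1 C A B) inj1 = idm A /\ comp (@prj2 C A B) inj2 = idm B /\
      comp (@prj1 C A B) inj2 = 0 /\ comp (@prj2 C A B) inj1 = 0 /\
      comp inj1 prj1 + comp inj2 prj2 = idm (dsum A B)).

Definition isom (C : Cat) (A B : Obj C) (f : Hom A B) : Prop :=
  exists g : Hom B A, comp g f = idm A /\ comp f g = idm B.

Definition iso_ob (C : Cat) (A B : Obj C) : Prop := exists f : Hom A B, isom f.

Definition heq (C : Cat) (A B A' B' : Obj C) (f : Hom A B) (g : Hom A' B') : Prop :=
  existT (fun p : Obj C * Obj C => Hom p.1 p.2) (A, B) f =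
  existT (fun p : Obj C * Obj C => Hom p.1 p.2) (A', B') g.

Record Endo (C : Cat) := {
  So : Obj C -> Obj C;
  Sm : forall A B : Obj C, Hom A B -> Hom (So A) (So B) }.
Arguments So {C}.
Arguments Sm {C} e {A B}.

Definition is_autom (C : Cat) (S : Endo C) : Prop :=
  (forall A : Obj C, Sm S (idm A) = idm (So S A)) /\
  (forall (A B X : Obj C) (f : Hom B X) (g : Hom A B),
      Sm S (comp f g) = comp (Sm S f) (Sm S g)) /\
  (forall (A B : Obj C) (f g : Hom A B), Sm S (f + g) = Sm S f + Sm S g) /\
  injective (So S) /\ (forall Y : Obj C, exists A, So S A = Y) /\
  (forall A B : Obj C, bijective (@Sm C S A B)).

(* n-Sigma-sequences.  Paper indices 1..n are shifted to 0..n-1; the   *)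
(* last index n-1 is written n.-2.+1 (equal to n-1 for n >= 2) so that *)
(* it is definitionally the successor of the index n.-2 of the         *)
(* (n-1)-th map.  ob i, mo i for larger indices are unused junk.       *)
Section Seqs.
Variables (C : Cat) (S : Endo C) (n : nat).

Record NSeq := {
  ob : nat -> Obj C;
  mo : forall i, Hom (ob i) (ob i.+1);          (* alpha_{i+1}, for i <= n-2 *)
  lst : Hom (ob n.-2.+1) (So S (ob 0)) }.

Definition is_morph (X Y : NSeq) (phi : forall i, Hom (ob X i) (ob Y i)) : Prop :=
  (forall i, (i <= n.-2)%N -> comp (mo Y i) (phi i) = comp (phi i.+1) (mo X i)) /\
  comp (lst Y) (phi n.-2.+1) = comp (Sm S (phi 0)) (lst X).

Definition is_iso_seq (X Y : NSeq) (phi : forall i, Hom (ob X i) (ob Y i)) : Prop :=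
  is_morph phi /\ forall i, (i <= n.-2.+1)%N -> isom (phi i).

Definition diag (A1 A2 B1 B2 : Obj C) (f : Hom A1 A2) (g : Hom B1 B2)
  : Hom (dsum A1 B1) (dsum A2 B2) :=
  comp inj1 (comp f prj1) + comp inj2 (comp g prj2).

Definition sig_dsum (A B : Obj C) : Hom (dsum (So S A) (So S B)) (So S (dsum A B)) :=
  comp (Sm S (@inj1 C A B)) prj1 + comp (Sm S (@inj2 C A B)) prj2.

(* 2x2 matrix [[-a, 0], [c, b]] : A1 (+) B1 -> A2 (+) B2 *)
Definition cmat (A1 A2 B1 B2 : Obj C) (a : Hom A1 A2) (c : Hom A1 B2) (b : Hom B1 B2)
  : Hom (dsum A1 B1) (dsum A2 B2) :=
  comp inj1 (comp (- a) prj1) + comp inj2 (comp c prj1) + comp inj2 (comp b prj2).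

Definition dsum_seq (X Y : NSeq) : NSeq :=
  {| ob := fun i => dsum (ob X i) (ob Y i);
     mo := fun i => diag (mo X i) (mo Y i);
     lst := comp (sig_dsum (ob X 0) (ob Y 0)) (diag (lst X) (lst Y)) |}.

Definition is_rot (X Y : NSeq) : Prop :=
  (forall i, (i.+1 < n.-2.+1)%N -> heq (mo Y i) (mo X i.+1)) /\
  heq (mo Y n.-2) (lst X) /\
  heq (lst Y) (if odd n then - Sm S (mo X 0) else Sm S (mo X 0)).

Definition is_cone (X Y : NSeq) (phi : forall i, Hom (ob X i) (ob Y i)) (Z : NSeq)
  : Prop :=
  (forall i, (i < n.-2)%N -> heq (mo Z i) (cmat (mo X i.+1) (phi i.+1) (mo Y i))) /\
  heq (mo Z n.-2) (cmat (lst X) (phi n.-2.+1) (mo Y n.-2)) /\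
  heq (lst Z) (comp (sig_dsum (ob X 1) (ob Y 0))
                    (cmat (Sm S (mo X 0)) (Sm S (phi 0)) (lst Y))).

Definition nangulated (N : NSeq -> Prop) : Prop :=
  (forall X Y, N X -> N Y -> N (dsum_seq X Y)) /\
  (forall X Y, N (dsum_seq X Y) -> N X /\ N Y) /\
  (forall X Y phi, @is_iso_seq X Y phi -> N X -> N Y) /\
  (forall (A : Obj C) (X : NSeq), heq (mo X 0) (idm A) ->
      (forall i, (2 <= i <= n.-2.+1)%N -> ob X i = zob) -> N X) /\
  (forall (A B : Obj C) (f : Hom A B), exists X, N X /\ heq (mo X 0) f) /\
  (forall X Y, is_rot X Y -> (N X <-> N Y)) /\
  (forall X Y (f1 : Hom (ob X 0) (ob Y 0)) (f2 : Hom (ob X 1) (ob Y 1)),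
      N X -> N Y -> comp (mo Y 0) f1 = comp f2 (mo X 0) ->
      exists phi : (forall i, Hom (ob X i) (ob Y i)), phi 0 = f1 /\ phi 1 = f2 /\ @is_morph X Y phi) /\
  (forall X Y (f1 : Hom (ob X 0) (ob Y 0)) (f2 : Hom (ob X 1) (ob Y 1)),
      N X -> N Y -> comp (mo Y 0) f1 = comp f2 (mo X 0) ->
      exists phi : (forall i, Hom (ob X i) (ob Y i)), phi 0 = f1 /\ phi 1 = f2 /\ @is_morph X Y phi /\
        exists Z, @is_cone X Y phi Z /\ N Z).

(* Grothendieck group.  An element of F(C) is represented by a formal  *)
(* Z-combination (list of pairs); two represent the same element iff   *)
(* they have the same coefficient at every isomorphism class.          *)
Definition coef (s : seq (int * Obj C)) (Y : Obj C) : int :=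
  \sum_(p <- s) (if excluded_middle_informative (iso_ob p.2 Y) then p.1 else 0).

Definition chi (X : NSeq) : seq (int * Obj C) :=
  [seq ((-1) ^+ i, ob X i) | i <- iota 0 n].

Definition inR (N : NSeq -> Prop) (s : seq (int * Obj C)) : Prop :=
  exists (l : seq (int * NSeq)) (m : int),
    (forall p, List.In p l -> N p.2) /\
    forall Y : Obj C,
      coef s Y = \sum_(p <- l) p.1 * coef (chi p.2) Y
                 + (if odd n then 0 else m * coef [:: (1, zob)] Y).

Definition K0eq (N : NSeq -> Prop) (A B : Obj C) : Prop :=
  inR N [:: (1, A); (-1, B)].

End Seqs.

From Pilot Require Import Defs.
From mathcomp Require Import all_boot all_order all_algebra.
From Stdlib Require Import ClassicalEpsilon.
From mathcomp Require Import zify ring.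
Import GRing.Theory.

Set Implicit Arguments.
Unset Strict Implicit.
Unset Printing Implicit Defensive.

Local Open Scope ring_scope.

(* [Hom] and [comp] would otherwise resolve to vector.Hom and ssrfun.comp. *)
Local Notation Hom := (@Defs.Hom _).
Local Notation comp := (@Defs.comp _ _ _ _).

(* Call finite families u, v of objects stably equal when there are n-angles whose first objects
   are the direct sums of u and of v, each plus a common summand, and whose other objects agree.
   Stable equality is an equivalence relation, compatible with concatenation and cancellable.
   For an n-angle X it identifies the even-indexed objects X_0, X_2, ..., X_{n-1} with the
   odd-indexed ones: compare X plus one sum of rotated trivial angles A -1-> A -> 0 -> ...
   with another such sum, chosen so that every X_j (j >= 1) telescopes down to position 0 or 1.
   As n is odd, [A] = [B] means that <A> - <B> is an integer combination of the
   chi(X) = (even objects) - (odd objects), and counting multiplicities of isomorphism classes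
   turns this into stable equality of A and B, i.e. (2). Conversely, the two n-angles of (2)
   together with the split n-angles A -> A + C_1 -> C_1 -> 0 -> ... and
   B -> B + C_1 -> C_1 -> 0 -> ... write <A> - <B> as a combination of the chi's. *)

Lemma has_split (T : Type) (p : pred T) (s : seq T) :
  has p s -> exists s1 x s2, s = s1 ++ x :: s2 /\ p x.
Proof.
elim: s => [|y s IH] //= /orP [py | /IH [s1 [x [s2 [-> px]]]]]; first by exists [::], y, s.
by exists (y :: s1), x, s2.
Qed.

Section Additive.
Variables (C : Cat) (hC : Defs.additive C).

Lemma compA (A B X D : Obj C) (f : Hom X D) (g : Hom B X) (h : Hom A B) :
  comp f (comp g h) = comp (comp f g) h.
Proof. by case: hC => H _; apply: H. Qed.

Lemma comp1f (A B : Obj C) (f : Hom A B) : comp (idm B) f = f.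
Proof. by case: hC => _ [H _]; case: (H _ _ f). Qed.

Lemma compf1 (A B : Obj C) (f : Hom A B) : comp f (idm A) = f.
Proof. by case: hC => _ [H _]; case: (H _ _ f). Qed.

Lemma compDr (A B X : Obj C) (f : Hom B X) (g h : Hom A B) :
  comp f (g + h) = comp f g + comp f h.
Proof. by case: hC => _ [_ [H _]]; apply: H. Qed.

Lemma compDl (A B X : Obj C) (f g : Hom B X) (h : Hom A B) :
  comp (f + g) h = comp f h + comp g h.
Proof. by case: hC => _ [_ [_ [H _]]]; apply: H. Qed.

Lemma hom_zob_r (A : Obj C) (f : Hom A zob) : f = 0.
Proof. by case: hC => _ [_ [_ [_ [_ [H _]]]]]; apply: H. Qed.

Lemma comp0f (A B X : Obj C) (h : Hom A B) : comp (0 : Hom B X) h = 0.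
Proof. by apply: (@addrI _ (comp 0 h)); rewrite -compDl !addr0. Qed.

Lemma compf0 (A B X : Obj C) (f : Hom B X) : comp f (0 : Hom A B) = 0.
Proof. by apply: (@addrI _ (comp f 0)); rewrite -compDr !addr0. Qed.

Section Biproduct.
Variables A B : Obj C.

Let biprod := proj2 (proj2 (proj2 (proj2 (proj2 (proj2 hC))))) A B.

Lemma prj1_inj1 : comp (@prj1 C A B) inj1 = idm A.
Proof. by case: biprod. Qed.
Lemma prj2_inj2 : comp (@prj2 C A B) inj2 = idm B.
Proof. by case: biprod => _ []. Qed.
Lemma prj1_inj2 : comp (@prj1 C A B) inj2 = 0.
Proof. by case: biprod => _ [_ []]. Qed.
Lemma prj2_inj1 : comp (@prj2 C A B) inj1 = 0.
Proof. by case: biprod => _ [_ [_ []]]. Qed.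
Lemma dsum_idm : comp (@inj1 C A B) prj1 + comp inj2 prj2 = idm (dsum A B).
Proof. by case: biprod => _ [_ [_ [_ ->]]]. Qed.

Lemma prj1_inj1K (X : Obj C) (h : Hom X A) : comp (@prj1 C A B) (comp inj1 h) = h.
Proof. by rewrite compA prj1_inj1 comp1f. Qed.
Lemma prj2_inj2K (X : Obj C) (h : Hom X B) : comp (@prj2 C A B) (comp inj2 h) = h.
Proof. by rewrite compA prj2_inj2 comp1f. Qed.
Lemma prj1_inj2K (X : Obj C) (h : Hom X B) : comp (@prj1 C A B) (comp inj2 h) = 0.
Proof. by rewrite compA prj1_inj2 comp0f. Qed.
Lemma prj2_inj1K (X : Obj C) (h : Hom X A) : comp (@prj2 C A B) (comp inj1 h) = 0.
Proof. by rewrite compA prj2_inj1 comp0f. Qed.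

End Biproduct.

Ltac biprod_simpl := rewrite ?(compDl, compDr) -?compA;
  repeat rewrite ?(prj1_inj1K, prj2_inj2K, prj1_inj2K, prj2_inj1K, prj1_inj1, prj2_inj2,
    prj1_inj2, prj2_inj1, comp0f, compf0, addr0, add0r,
    comp1f, compf1).

Lemma iso_ob_refl (A : Obj C) : iso_ob A A.
Proof. by exists (idm A), (idm A); rewrite comp1f. Qed.

Lemma iso_ob_sym (A B : Obj C) : iso_ob A B -> iso_ob B A.
Proof. by case=> f [g [h1 h2]]; exists g, f. Qed.

Lemma iso_ob_trans (A B D : Obj C) : iso_ob A B -> iso_ob B D -> iso_ob A D.
Proof.
case=> f [f' [h1 h2]] [g [g' [k1 k2]]]; exists (comp g f), (comp f' g'); split.
  by rewrite -compA (compA g') k1 comp1f.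
by rewrite -compA (compA f) h2 comp1f.
Qed.

Lemma diag_comp (A1 A2 A3 B1 B2 B3 : Obj C) (f : Hom A1 A2) (f' : Hom A2 A3)
    (g : Hom B1 B2) (g' : Hom B2 B3) :
  comp (diag f' g') (diag f g) = diag (comp f' f) (comp g' g).
Proof. by rewrite /diag; biprod_simpl; rewrite !compA. Qed.

Lemma diag_idm (A B : Obj C) : diag (idm A) (idm B) = idm (dsum A B).
Proof. by rewrite /diag !comp1f dsum_idm. Qed.

Lemma iso_ob_dsum (A A' B B' : Obj C) :
  iso_ob A A' -> iso_ob B B' -> iso_ob (dsum A B) (dsum A' B').
Proof.
case=> f [f' [h1 h2]] [g [g' [k1 k2]]]; exists (diag f g), (diag f' g').
by rewrite !diag_comp h1 h2 k1 k2 !diag_idm.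
Qed.

Lemma iso_ob_dsumC (A B : Obj C) : iso_ob (dsum A B) (dsum B A).
Proof.
exists (comp inj2 prj1 + comp inj1 prj2), (comp inj2 prj1 + comp inj1 prj2).
by split; biprod_simpl; rewrite addrC dsum_idm.
Qed.

Lemma iso_ob_dsum0l (A : Obj C) : iso_ob (dsum zob A) A.
Proof.
exists prj2, inj2; split; last by rewrite prj2_inj2.
by rewrite -dsum_idm (hom_zob_r (@prj1 C zob A)) compf0 add0r.
Qed.

Lemma iso_ob_dsum0r (A : Obj C) : iso_ob (dsum A zob) A.
Proof. exact: iso_ob_trans (iso_ob_dsumC _ _) (iso_ob_dsum0l _). Qed.

Lemma iso_ob_dsumA (A B D : Obj C) : iso_ob (dsum (dsum A B) D) (dsum A (dsum B D)).
Proof.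
exists (comp inj1 (comp prj1 prj1) + comp inj2 (comp inj1 (comp prj2 prj1))
        + comp inj2 (comp inj2 prj2)).
exists (comp inj1 (comp inj1 prj1) + comp inj1 (comp inj2 (comp prj1 prj2))
        + comp inj2 (comp prj2 prj2)).
split; biprod_simpl.
  by rewrite !compA -!compDl -!compA -compDr dsum_idm compf1 dsum_idm.
by rewrite -addrA !compA -compDl -!compA -compDr dsum_idm compf1 dsum_idm.
Qed.

Definition msum (u : seq (Obj C)) : Obj C := foldr dsum zob u.

Definition isob (X Y : Obj C) : bool :=
  if excluded_middle_informative (iso_ob X Y) then true else false.

Lemma isobP X Y : reflect (iso_ob X Y) (isob X Y).
Proof. by rewrite /isob; case: excluded_middle_informative => h; constructor. Qed.

Lemma isob_iso X X' Y : iso_ob X X' -> isob X Y = isob X' Y.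
Proof.
move=> XX'; apply/idP/idP => /isobP h; apply/isobP.
  exact: (iso_ob_trans (iso_ob_sym XX') h).
exact: (iso_ob_trans XX' h).
Qed.

Definition cnt_iso (Y : Obj C) (u : seq (Obj C)) : nat := count (isob^~ Y) u.

Definition perm_iso (u v : seq (Obj C)) : Prop := forall Y, cnt_iso Y u = cnt_iso Y v.

Lemma cnt_iso_cat Y u v : cnt_iso Y (u ++ v) = (cnt_iso Y u + cnt_iso Y v)%N.
Proof. exact: count_cat. Qed.

Ltac perm_iso_count := move=> ?; rewrite ?cnt_iso_cat; lia.

Lemma perm_iso_sym u v : perm_iso u v -> perm_iso v u.
Proof. by move=> uv Y. Qed.

Lemma perm_iso_trans u v w : perm_iso u v -> perm_iso v w -> perm_iso u w.
Proof. by move=> uv vw Y; rewrite uv. Qed.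

Lemma msum_cat u v : iso_ob (msum (u ++ v)) (dsum (msum u) (msum v)).
Proof.
elim: u => [|X u IH] /=; first exact: iso_ob_sym (iso_ob_dsum0l _).
apply: iso_ob_trans (iso_ob_dsum (iso_ob_refl X) IH) _.
exact: iso_ob_sym (iso_ob_dsumA _ _ _).
Qed.

Lemma msum_mid u X v : iso_ob (msum (u ++ X :: v)) (dsum X (msum (u ++ v))).
Proof.
elim: u => [|Z u IH] /=; first exact: iso_ob_refl.
apply: iso_ob_trans (iso_ob_dsum (iso_ob_refl Z) IH) _.
apply: iso_ob_trans (iso_ob_sym (iso_ob_dsumA _ _ _)) _.
apply: iso_ob_trans (iso_ob_dsum (iso_ob_dsumC _ _) (iso_ob_refl _)) _.
exact: iso_ob_dsumA.
Qed.

Lemma msum_perm_iso u v : perm_iso u v -> iso_ob (msum u) (msum v).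
Proof.
elim: u v => [|X u IH] v uv.
  case: v uv => [|Y v] uv; first exact: iso_ob_refl.
  by have := uv Y; rewrite /cnt_iso /= (introT (isobP _ _) (iso_ob_refl Y)).
have : (0 < cnt_iso X v)%N by rewrite -uv /cnt_iso /= (introT (isobP _ _) (iso_ob_refl X)).
rewrite /cnt_iso -has_count => /has_split [v1 [Y [v2 [def_v /isobP YX]]]]; subst v.
apply: iso_ob_trans _ (iso_ob_sym (msum_mid _ _ _)).
apply: iso_ob_dsum => //; first exact: iso_ob_sym.
apply: IH => Z; have := uv Z; rewrite /cnt_iso /= !count_cat /= (isob_iso Z YX); lia.
Qed.

Section Angles.
Variables (S : Endo C) (n : nat) (N : NSeq S n -> Prop).
Hypotheses (hS : is_autom S) (hn : (3 <= n)%N) (hN : nangulated N).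

Lemma Sm0 (A B : Obj C) : Sm S (0 : Hom A B) = 0.
Proof.
case: hS => _ [_ [SmD _]].
by apply: (@addrI _ (Sm S (0 : Hom A B))); rewrite -SmD !addr0.
Qed.

Lemma iso_ob_So_zob : iso_ob (So S zob) (@zob C).
Proof.
have Sm_idm : Sm S (idm zob) = idm (So S zob) by case: hS.
exists 0, 0; split; rewrite comp0f //; last exact/esym/hom_zob_r.
by rewrite -Sm_idm (hom_zob_r (idm zob)) Sm0.
Qed.

Definition Ang (D : nat -> Obj C) : Prop :=
  exists X, N X /\ forall i, (i < n)%N -> iso_ob (ob X i) (D i).

Lemma Ang_iso (D E : nat -> Obj C) :
  Ang D -> (forall i, (i < n)%N -> iso_ob (D i) (E i)) -> Ang E.
Proof.
case=> X [NX XD] DE; exists X; split => // i lt_in.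
exact: (iso_ob_trans (XD i lt_in) (DE i lt_in)).
Qed.

Lemma Ang_realize (D : nat -> Obj C) : Ang D ->
  exists X, N X /\ forall i, (i < n)%N -> ob X i = D i.
Proof.
case=> X [NX XD].
have isos i : {fg : Hom (ob X i) (D i) * Hom (D i) (ob X i) |
    (i < n)%N -> comp fg.2 fg.1 = idm _ /\ comp fg.1 fg.2 = idm _}.
  case: (ltnP i n) => [lt_in | _]; last by exists (0, 0).
  apply: constructive_indefinite_description.
  by case: (XD i lt_in) => f [g fg]; exists (f, g).
pose f i := (sval (isos i)).1; pose g i := (sval (isos i)).2.
have gf i : (i < n)%N -> comp (g i) (f i) = idm _ by case/(svalP (isos i)).
have lt_last : (n.-2.+1 < n)%N by lia.
pose Y := @Build_NSeq C S n D (fun i => comp (f i.+1) (comp (mo X i) (g i)))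
  (comp (Sm S (f 0%N)) (comp (lst X) (g n.-2.+1))).
exists Y; split => //; case: hN => _ [_ [N_iso _]].
apply: (N_iso X Y f) => //; split; first split.
- by move=> i le_i /=; rewrite -!compA gf ?compf1 //; lia.
- by rewrite /= -!compA gf ?compf1.
- by move=> i le_i; exists (g i); apply: (svalP (isos i)); lia.
Qed.

Lemma Ang_dsum (D E : nat -> Obj C) :
  Ang D -> Ang E -> Ang (fun i => dsum (D i) (E i)).
Proof.
case=> X [NX XD] [Y [NY YE]]; exists (dsum_seq X Y); split; first by case: hN => H _; apply: H.
by move=> i lt_in; apply: iso_ob_dsum => //; [apply: XD | apply: YE].
Qed.

Definition trivial_ob (D : Obj C) (k i : nat) : Obj C :=
  if (i == k) || (i == k.+1) then D else zob.

Lemma Ang_trivial (D : Obj C) : Ang (trivial_ob D 0).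
Proof.
pose ob0 i : Obj C := if i is (0 | 1)%N then D else zob.
pose mo0 i : Hom (ob0 i) (ob0 i.+1) :=
  if i is 0%N return Hom (ob0 i) (ob0 i.+1) then idm D else 0.
exists (@Build_NSeq C S n ob0 mo0 0); split.
  by case: hN => _ [_ [_ [N_triv _]]]; apply: (N_triv D) => // -[|[|i]].
by case=> [|[|i]] _; apply: iso_ob_refl.
Qed.

Definition castH (A A' B B' : Obj C) (eA : A = A') (eB : B = B') (f : Hom A B) : Hom A' B' :=
  match eA in _ = A0, eB in _ = B0 return Hom A0 B0 with erefl, erefl => f end.

Lemma heq_castH (A A' B B' : Obj C) (eA : A = A') (eB : B = B') (f : Hom A B) :
  heq (castH eA eB f) f.
Proof. by case: A' / eA; case: B' / eB. Qed.

Section Rotation.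
Variable X : NSeq S n.

Definition rot_ob (i : nat) : Obj C :=
  if i == n.-2.+1 then So S (ob X 0) else ob X i.+1.

Lemma rot_ob_inner i : (i.+1 < n.-2.+1)%N -> ob X i.+1 = rot_ob i.
Proof. by move=> lt_i; rewrite /rot_ob ifN //; apply/eqP; lia. Qed.

Lemma rot_ob_inner_succ i : (i.+1 < n.-2.+1)%N -> ob X i.+2 = rot_ob i.+1.
Proof. by move=> lt_i; rewrite /rot_ob ifN //; apply/eqP; lia. Qed.

Lemma rot_ob_penult i : i = n.-2 -> ob X n.-2.+1 = rot_ob i.
Proof. by move=> ->; rewrite /rot_ob ifN //; apply/eqP; lia. Qed.

Lemma rot_ob_last i : i = n.-2 -> So S (ob X 0) = rot_ob i.+1.
Proof. by move=> ->; rewrite /rot_ob eqxx. Qed.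

Definition rot_mo (i : nat) : Hom (rot_ob i) (rot_ob i.+1) :=
  match sumbool_of_bool (i.+1 < n.-2.+1)%N with
  | left lt_i => castH (rot_ob_inner lt_i) (rot_ob_inner_succ lt_i) (mo X i.+1)
  | right _ => match PeanoNat.Nat.eq_dec i n.-2 with
               | left e => castH (rot_ob_penult e) (rot_ob_last e) (lst X)
               | right _ => 0 end end.

Definition rot_lst : Hom (rot_ob n.-2.+1) (So S (rot_ob 0)) :=
  castH (rot_ob_last (erefl n.-2)) (erefl (So S (ob X 1)))
    (if odd n then - Sm S (mo X 0) else Sm S (mo X 0)).

Definition rotation := @Build_NSeq C S n rot_ob rot_mo rot_lst.

Lemma is_rot_rotation : is_rot X rotation.
Proof.
split; [|split].
- move=> i lt_i /=; rewrite /rot_mo; case: sumbool_of_bool => h; first exact: heq_castH.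
  by rewrite lt_i in h.
- rewrite /= /rot_mo; case: sumbool_of_bool => [h | _]; first by exfalso; move: (h); rewrite ltnn.
  by case: PeanoNat.Nat.eq_dec => // e; apply: heq_castH.
- exact: heq_castH.
Qed.

End Rotation.

Lemma Ang_rot (D : nat -> Obj C) :
  Ang D -> Ang (fun i => if i == n.-2.+1 then So S (D 0%N) else D i.+1).
Proof.
case/Ang_realize => X [NX XD]; exists (rotation X); split.
  by case: hN => _ [_ [_ [_ [_ [N_rot _]]]]]; apply/(N_rot _ _ (is_rot_rotation X)).
by move=> i lt_in; rewrite /= /rot_ob; case: eqP => e; rewrite XD; try lia; apply: iso_ob_refl.
Qed.

(* Rotating the trivial angle on D' twice puts S D' at positions n-2 and n-1; each further
   rotation moves the pair one step down, the new last object S 0 being a zero object. *)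
Lemma Ang_trivial_at (D : Obj C) (k : nat) : (k <= n.-2)%N -> Ang (trivial_ob D k).
Proof.
move=> le_k; have [m def_k] : exists m, (k + m = n.-2)%N by exists (n.-2 - k)%N; lia.
elim: m k D le_k def_k => [|m IH] k D le_k def_k.
  have -> : k = n.-2 by lia.
  have [D' <-] : exists D', So S D' = D by case: hS => _ [_ [_ [_ [surj _]]]].
  apply: Ang_iso (Ang_rot (Ang_rot (Ang_trivial D'))) _ => i lt_in.
  rewrite /trivial_ob /=; do ! case: eqP => //= ?; try lia; exact: iso_ob_refl.
apply: Ang_iso (Ang_rot (IH k.+1 D _ _)) _ => [||i lt_in]; try lia.
rewrite /trivial_ob /=; case: eqP => [e | _]; last exact: iso_ob_refl.
by rewrite ifN; [apply: iso_ob_So_zob | apply/norP; split; apply/eqP; lia].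
Qed.

Definition AngL (L : nat -> seq (Obj C)) : Prop := Ang (fun i => msum (L i)).

Lemma AngL_perm_iso (L L' : nat -> seq (Obj C)) :
  (forall i, (i < n)%N -> perm_iso (L i) (L' i)) -> AngL L -> AngL L'.
Proof. by move=> LL' AngL_L; apply: Ang_iso AngL_L _ => i lt_in; apply/msum_perm_iso/LL'. Qed.

Lemma AngL_cat (L L' : nat -> seq (Obj C)) :
  AngL L -> AngL L' -> AngL (fun i => L i ++ L' i).
Proof.
by move=> AngL_L AngL_L'; apply: Ang_iso (Ang_dsum AngL_L AngL_L') _ => i _;
  apply/iso_ob_sym/msum_cat.
Qed.

Lemma AngL_nil : AngL (fun _ => [::]).
Proof.
apply: Ang_iso (Ang_trivial zob) _ => i _.
by rewrite /trivial_ob; case: ifP => _; apply: iso_ob_refl.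
Qed.

Lemma AngL_flatten (F : nat -> nat -> seq (Obj C)) (s : seq nat) :
  (forall j, j \in s -> AngL (F j)) -> AngL (fun i => flatten [seq F j i | j <- s]).
Proof.
elim: s => [|j s IH] AngL_F /=; first exact: AngL_nil.
apply: (AngL_cat (AngL_F j (mem_head _ _))); apply: IH => k ks.
by apply: AngL_F; rewrite inE ks orbT.
Qed.

Lemma AngL_ob X : N X -> AngL (fun i => [:: ob X i]).
Proof. by move=> NX; exists X; split => // i _; apply/iso_ob_sym/iso_ob_dsum0r. Qed.

Definition trivial_seq (D : Obj C) (k i : nat) : seq (Obj C) :=
  if (i == k) || (i == k.+1) then [:: D] else [::].

Lemma AngL_trivial (D : Obj C) (k : nat) : (k <= n.-2)%N -> AngL (trivial_seq D k).
Proof.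
move=> le_k; apply: Ang_iso (Ang_trivial_at D le_k) _ => i _.
rewrite /trivial_ob /trivial_seq; case: ifP => _; last exact: iso_ob_refl.
exact/iso_ob_sym/iso_ob_dsum0r.
Qed.

Fixpoint stairs (j : nat) (D : Obj C) : nat -> seq (Obj C) :=
  match j with
  | 0 => fun _ => [::]
  | 1 => trivial_seq D 0
  | j'.+2 => fun i => trivial_seq D j'.+1 i ++ stairs j' D i
  end.

Lemma AngL_stairs (j : nat) (D : Obj C) : (j <= n.-1)%N -> AngL (stairs j D).
Proof.
elim/ltn_ind: j => -[|[|j]] IH le_j /=; first exact: AngL_nil.
  by apply: AngL_trivial; lia.
by apply: AngL_cat; [apply: AngL_trivial | apply: IH]; lia.
Qed.

Lemma stairs0 (j : nat) (D : Obj C) : stairs j D 0 = if odd j then [:: D] else [::].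
Proof. by elim/ltn_ind: j => -[|[|j]] IH //=; rewrite IH // negbK; case: ifP. Qed.

Lemma stairs_shift (j : nat) (D : Obj C) (i : nat) : (0 < j)%N -> (0 < i)%N ->
  perm_iso (stairs j D i) ((if j == i then [:: D] else [::]) ++ stairs j.-1 D i).
Proof.
elim/ltn_ind: j => -[|[|j]] IH // _ lt0i Y.
  by rewrite /= /trivial_seq (eq_sym 1%N) cats0; case: eqP => [|_]; case: eqP => //=; lia.
have -> : stairs j.+2 D i = trivial_seq D j.+1 i ++ stairs j D i by [].
rewrite !cnt_iso_cat (IH j.+1) // cnt_iso_cat /trivial_seq.
rewrite ![_ == i]eq_sym; have [e1|n1] := eqVneq i j.+1; have [e2|n2] := eqVneq i j.+2.
all: rewrite /= ?addn0 //; lia.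
Qed.

Lemma flatten_stairs0 (f : nat -> nat) (F : nat -> Obj C) (s : seq nat) :
  flatten [seq stairs (f j) (F j) 0 | j <- s] = [seq F j | j <- s & odd (f j)].
Proof. by elim: s => //= j s ->; rewrite stairs0; case: ifP. Qed.

Lemma flatten_stairs_shift (F : nat -> Obj C) (s : seq nat) (i : nat) :
  (0 < i)%N -> {in s, forall j, 0 < j}%N ->
  perm_iso (flatten [seq stairs j (F j) i | j <- s])
    ([seq F j | j <- s & j == i] ++ flatten [seq stairs j.-1 (F j) i | j <- s]).
Proof.
move=> lt0i; elim: s => //= j s IH s_gt0 Y.
have j_gt0 : (0 < j)%N by apply: s_gt0; rewrite mem_head.
rewrite cnt_iso_cat (stairs_shift (F j) j_gt0 lt0i) IH => [|k ks]; last first.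
  by apply: s_gt0; rewrite inE ks orbT.
by case: (j == i); rewrite !cnt_iso_cat /cnt_iso /=; lia.
Qed.

Definition even_obs (X : NSeq S n) : seq (Obj C) := [seq ob X i | i <- iota 0 n & ~~ odd i].
Definition odd_obs (X : NSeq S n) : seq (Obj C) := [seq ob X i | i <- iota 0 n & odd i].

Definition with_first (x : seq (Obj C)) (L : nat -> seq (Obj C)) (i : nat) : seq (Obj C) :=
  if i is 0 then x else L i.

(* Condition (2) of the theorem, for the direct sums of u and v in place of A and B and up to
   isomorphism of the n-angles. *)
Definition stable_eq (u v : seq (Obj C)) : Prop :=
  exists c L, AngL (with_first (u ++ c) L) /\ AngL (with_first (v ++ c) L).

(* Adding to X the stairs of its objects X_j (j >= 1) shifted down by one yields, away from
   position 0, the same multisets as the sum of the unshifted stairs; at position 0 the first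
   sum has the even-indexed objects of X and the second the odd-indexed ones. *)
Lemma stable_eq_angle X : N X -> stable_eq (even_obs X) (odd_obs X).
Proof.
move=> NX; set js := iota 1 n.-1.
have js_gt0 : {in js, forall j, 0 < j}%N by move=> j; rewrite mem_iota; lia.
have js_le : {in js, forall j, j <= n.-1}%N by move=> j; rewrite mem_iota; lia.
set P := fun i => ob X i :: flatten [seq stairs j.-1 (ob X j) i | j <- js].
set Q := fun i => flatten [seq stairs j (ob X j) i | j <- js].
have AngL_P : AngL P.
  apply: (AngL_cat (AngL_ob NX)); apply: AngL_flatten => j /js_le le_j.
  by apply: AngL_stairs; lia.
have AngL_Q : AngL Q by apply: AngL_flatten => j /js_le; apply: AngL_stairs.
have iota_n : iota 0 n = 0%N :: js by rewrite /js; case: (n) hn.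
have P0 : P 0%N = even_obs X.
  rewrite /P /even_obs iota_n /= flatten_stairs0; congr (_ :: _).
  by congr (map _ _); apply: eq_in_filter => -[|j] /js_gt0 //= _; rewrite negbK.
have Q0 : Q 0%N = odd_obs X by rewrite /Q /odd_obs iota_n /= flatten_stairs0.
have PQ i : (0 < i < n)%N -> perm_iso (P i) (Q i).
  move=> /andP [lt0i lt_in]; apply: perm_iso_sym.
  have select_i : [seq j <- js | j == i] = [:: i].
    by apply: filter_pred1_uniq; rewrite ?iota_uniq // mem_iota; lia.
  by have := flatten_stairs_shift (ob X) lt0i js_gt0; rewrite select_i.
exists [::], Q; rewrite !cats0; split.
  by apply: AngL_perm_iso AngL_P => -[|i] lt_in //=; [rewrite P0 | apply: PQ].
by apply: AngL_perm_iso AngL_Q => -[|i] //= _; rewrite Q0.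
Qed.

Lemma AngL_with_first_perm_iso x x' L :
  perm_iso x x' -> AngL (with_first x L) -> AngL (with_first x' L).
Proof. by move=> xx'; apply: AngL_perm_iso => -[|i] _ //= Y. Qed.

Lemma AngL_with_first u : exists L, AngL (with_first u L).
Proof.
elim: u => [|X u [L AngL_L]].
  by exists (fun _ => [::]); apply: AngL_perm_iso AngL_nil => -[|i].
exists (fun i => trivial_seq X 0 i ++ L i).
apply: AngL_perm_iso (AngL_cat (AngL_trivial X (leq0n _)) AngL_L) => -[|i] //.
Qed.

Lemma stable_eq_perm_iso u u' v v' :
  perm_iso u u' -> perm_iso v v' -> stable_eq u v -> stable_eq u' v'.
Proof.
move=> uu' vv' [c [L [AngL_u AngL_v]]]; exists c, L.
split; [apply: AngL_with_first_perm_iso AngL_u | apply: AngL_with_first_perm_iso AngL_v].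
  by move=> Y; rewrite !cnt_iso_cat uu'.
by move=> Y; rewrite !cnt_iso_cat vv'.
Qed.

Lemma stable_eq_refl u : stable_eq u u.
Proof. by have [L AngL_L] := AngL_with_first (u ++ [::]); exists [::], L. Qed.

Lemma stable_eq_sym u v : stable_eq u v -> stable_eq v u.
Proof. by case=> c [L [AngL_u AngL_v]]; exists c, L. Qed.

Lemma stable_eq_cat u v u' v' :
  stable_eq u v -> stable_eq u' v' -> stable_eq (u ++ u') (v ++ v').
Proof.
case=> c [L [AngL_u AngL_v]] [c' [L' [AngL_u' AngL_v']]].
exists (c ++ c'), (fun i => L i ++ L' i).
split; [apply: AngL_perm_iso (AngL_cat AngL_u AngL_u') |
        apply: AngL_perm_iso (AngL_cat AngL_v AngL_v')];
  by case=> [|i] _ //=; perm_iso_count.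
Qed.

Lemma stable_eq_cancel u v w : stable_eq (u ++ w) (v ++ w) -> stable_eq u v.
Proof. by case=> c [L AngL_uv]; exists (w ++ c), L; rewrite !catA. Qed.

Lemma stable_eq_trans u v w : stable_eq u v -> stable_eq v w -> stable_eq u w.
Proof.
move=> uv vw; apply: (@stable_eq_cancel _ _ v).
by apply: stable_eq_perm_iso (stable_eq_cat uv vw); perm_iso_count.
Qed.

Definition rep (k : nat) (u : seq (Obj C)) : seq (Obj C) := flatten (nseq k u).

Lemma cnt_iso_rep Y k u : cnt_iso Y (rep k u) = (k * cnt_iso Y u)%N.
Proof. by elim: k => //= k IH; rewrite cnt_iso_cat IH mulSn. Qed.

Lemma stable_eq_rep k u v : stable_eq u v -> stable_eq (rep k u) (rep k v).
Proof. by move=> uv; elim: k => [|k IH]; [apply: stable_eq_refl | apply: stable_eq_cat]. Qed.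

Lemma coef_chiE (X : NSeq S n) Y :
  coef (chi X) Y = \sum_(i <- iota 0 n) (-1) ^+ i * (isob (ob X i) Y)%:Z.
Proof.
rewrite /coef /chi big_map; apply: eq_bigr => i _ /=.
rewrite /isob; case: (excluded_middle_informative (iso_ob (ob X i) Y)) => _ /=.
  by rewrite mulr1.
by rewrite mulr0.
Qed.

Lemma coef_chi (X : NSeq S n) Y :
  coef (chi X) Y = (cnt_iso Y (even_obs X))%:Z - (cnt_iso Y (odd_obs X))%:Z.
Proof.
rewrite coef_chiE /even_obs /odd_obs; elim: (iota 0 n) => [|i s IH]; first by rewrite big_nil.
rewrite big_cons IH -signr_odd /cnt_iso /=.
by case: (odd i); rewrite /= ?expr0 ?expr1 ?mulN1r ?mul1r; lia.
Qed.

Lemma stable_eq_scaled X (k : int) : N X ->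
  exists x y, stable_eq x y /\
    forall Y, (cnt_iso Y x)%:Z - (cnt_iso Y y)%:Z = k * coef (chi X) Y.
Proof.
move=> /stable_eq_angle XX; case: k => m.
  exists (rep m (even_obs X)), (rep m (odd_obs X)); split; first exact: stable_eq_rep.
  by move=> Y; rewrite !cnt_iso_rep coef_chi !PoszM; ring.
exists (rep m.+1 (odd_obs X)), (rep m.+1 (even_obs X)).
split; first exact/stable_eq_rep/stable_eq_sym.
by move=> Y; rewrite !cnt_iso_rep coef_chi !PoszM NegzE; ring.
Qed.

Lemma stable_eq_of_chi (l : seq (int * NSeq S n)) u v :
  (forall p, List.In p l -> N p.2) ->
  (forall Y, (cnt_iso Y u)%:Z - (cnt_iso Y v)%:Z = \sum_(p <- l) p.1 * coef (chi p.2) Y) ->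
  stable_eq u v.
Proof.
elim: l u v => [|[k X] l IH] u v Nl uv.
  apply: stable_eq_perm_iso (stable_eq_refl u) => // Y.
  by move: (uv Y); rewrite big_nil; lia.
have [x [y [xy xyk]]] := stable_eq_scaled k (Nl _ (or_introl erefl)).
apply: (@stable_eq_cancel _ _ y); apply: stable_eq_trans (stable_eq_cat (stable_eq_refl v) xy).
apply: IH => [p lp | Y]; first by apply: Nl; right.
by move: (uv Y); rewrite big_cons !cnt_iso_cat !PoszD -(xyk Y) /=; lia.
Qed.

Lemma stable_eq_of_K0eq A B : odd n -> K0eq N A B -> stable_eq [:: A] [:: B].
Proof.
move=> odd_n [l [m [Nl lAB]]]; apply: (stable_eq_of_chi Nl) => Y.
move: (lAB Y); rewrite odd_n addr0 /coef !big_cons big_nil /= => <-.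
rewrite /cnt_iso /= /isob.
case: (excluded_middle_informative (iso_ob A Y)) => ? /=;
  case: (excluded_middle_informative (iso_ob B Y)) => ? /=; lia.
Qed.

Lemma angles_of_stable_eq A B : stable_eq [:: A] [:: B] ->
  exists (Cs : nat -> Obj C) (X Y : NSeq S n),
    N X /\ N Y /\ ob X 0 = dsum A (Cs 0%N) /\ ob Y 0 = dsum B (Cs 0%N) /\
    (forall i, (1 <= i < n)%N -> ob X i = Cs i /\ ob Y i = Cs i).
Proof.
case=> c [L [/Ang_realize [X [NX defX]] /Ang_realize [Y [NY defY]]]].
exists (fun i => msum (with_first c L i)), X, Y.
have lt0n : (0 < n)%N by lia.
split=> //; split=> //; split; first by rewrite defX.
split; first by rewrite defY.
by move=> -[|i] // /andP [_ lt_in]; rewrite defX ?defY.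
Qed.

Definition split_ob (E D : Obj C) (i : nat) : Obj C :=
  match i with 0 => E | 1 => dsum E D | 2 => D | _ => zob end.

Lemma Ang_split (E D : Obj C) : Ang (split_ob E D).
Proof.
have le1 : (1 <= n.-2)%N by lia.
apply: Ang_iso (Ang_dsum (Ang_trivial E) (Ang_trivial_at D le1)) _.
by case=> [|[|[|i]]] _; rewrite /trivial_ob /=;
  [apply: iso_ob_dsum0r | apply: iso_ob_refl | apply: iso_ob_dsum0l | apply: iso_ob_dsum0l].
Qed.

Lemma coef_chi_sub (P Q : NSeq S n) Y : (forall i, (2 <= i < n)%N -> ob P i = ob Q i) ->
  coef (chi P) Y - coef (chi Q) Y =
  (isob (ob P 0) Y)%:Z - (isob (ob Q 0) Y)%:Z - ((isob (ob P 1) Y)%:Z - (isob (ob Q 1) Y)%:Z).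
Proof.
move=> PQ; rewrite !coef_chiE.
have -> : iota 0 n = [:: 0, 1 & iota 2 n.-2]%N by case: (n) hn => [|[|m]].
rewrite !big_cons (@eq_big_seq _ _ _ _ _ _ (fun i => (-1) ^+ i * (isob (ob Q i) Y)%:Z)).
  by rewrite expr0 expr1 !mul1r !mulN1r; ring.
by move=> i; rewrite mem_iota => lt_i; rewrite PQ //; lia.
Qed.

Lemma K0eq_of_angles A B (Cs : nat -> Obj C) (X Y : NSeq S n) :
  odd n -> N X -> N Y -> ob X 0 = dsum A (Cs 0%N) -> ob Y 0 = dsum B (Cs 0%N) ->
  (forall i, (1 <= i < n)%N -> ob X i = Cs i /\ ob Y i = Cs i) -> K0eq N A B.
Proof.
move=> odd_n NX NY X0 Y0 XY.
have [ZA [NZA defZA]] := Ang_realize (Ang_split A (Cs 0%N)).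
have [ZB [NZB defZB]] := Ang_realize (Ang_split B (Cs 0%N)).
exists [:: (1, X); (-1, Y); (1, ZA); (-1, ZB)], 0; split.
  by move=> p /= [<-|[<-|[<-|[<-|[]]]]].
move=> Y'; rewrite odd_n addr0 /coef !big_cons !big_nil /= -!/(coef _ _).
have XY_tail i : (2 <= i < n)%N -> ob X i = ob Y i.
  by move=> lt_i; rewrite (proj1 (XY i _)) ?(proj2 (XY i _)) //; lia.
have Z_tail i : (2 <= i < n)%N -> ob ZA i = ob ZB i.
  by move=> lt_i; rewrite defZA ?defZB; try lia; case: i lt_i => [|[|[|i]]].
have := coef_chi_sub Y' XY_tail; have := coef_chi_sub Y' Z_tail.
rewrite X0 Y0 (proj1 (XY 1%N _)) ?(proj2 (XY 1%N _)) ?defZA ?defZB //=; try lia.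
rewrite /isob.
repeat match goal with |- context [excluded_middle_informative ?P] =>
  case: (excluded_middle_informative P) => ? /= end; lia.
Qed.

End Angles.

End Additive.

Local Close Scope ring_scope.

Theorem corollary2p4 (C : Cat) (S : Endo C) (n : nat) (N : NSeq S n -> Prop)
  (hC : Defs.additive C) (hS : is_autom S) (hn : 3 <= n) (hodd : odd n)
  (hN : nangulated N) (A B : Obj C) :
  K0eq N A B <->
  exists (Cs : nat -> Obj C) (X Y : NSeq S n),
    N X /\ N Y /\
    ob X 0 = dsum A (Cs 0) /\ ob Y 0 = dsum B (Cs 0) /\
    (forall i, 1 <= i < n -> ob X i = Cs i /\ ob Y i = Cs i).
Proof.
split=> [eqAB | [Cs [X [Y [NX [NY [X0 [Y0 XY]]]]]]]].
  exact/(angles_of_stable_eq hC hn hN)/(stable_eq_of_K0eq hC hS hn hN hodd).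
exact: (K0eq_of_angles hC hS hn hN hodd NX NY X0 Y0 XY).
Qed.
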